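(* Let $\mathcal{S}$ be the subdistribution monad, $\mathcal{S}(X)=\{p\colon X\to[0,1]\mid\sum_{x\in X}p(x)\le 1\}$ (unit: Dirac distributions; multiplication $\mu(P)(x)=\sum_{\nu}P(\nu)\nu(x)$), let $\mathcal{V}=[0,\infty]_+$, and let $\mathit{ev}_{\mathcal{S}}=\mathbb{E}\colon\mathcal{S}[0,\infty]\to[0,\infty]$, $\mathbb{E}(p)=\sum_{v}v\cdot p(v)$, with the convention $r\cdot\infty=\infty$ if $r>0$ and $0\cdot\infty=0$. For sets $X_1,X_2$ define $g_{X_1,X_2}\colon\mathcal{S}(X_1+X_2)\to\mathcal{S}X_1+\mathcal{S}X_2$ by $g_{X_1,X_2}(p)=p|_{X_1}$ (in the left summand) if $\mathrm{supp}(p)\cap X_1\neq\emptyset$, and $g_{X_1,X_2}(p)=p|_{X_2}$ (in the right summand) otherwise, where $\mathrm{supp}(p)=\{x\mid p(x)\neq0\}$. Then $g$ is a natural transformation that is compatible with the unit and the multiplication of $\mathcal{S}$ and is well-behaved with respect to $\mathbb{E}$.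
   Context: $[0,\infty]_+$ is the quantale on $[0,\infty]$ with the reversed order ($a\sqsubseteq b$ iff $a\ge b$) and extended addition as monoid operation; hence its top element is $\top=0$ and its bottom is $\bot=\infty$. For a monad $(T,\eta,\mu)$, a natural transformation $g\colon T((-)+(-))\Rightarrow T(-)+T(-)$ is compatible with the unit if $g_{Y_1,Y_2}\circ\eta_{Y_1+Y_2}=\eta_{Y_1}+\eta_{Y_2}$, and with the multiplication if $g_{Y_1,Y_2}\circ\mu_{Y_1+Y_2}=(\mu_{Y_1}+\mu_{Y_2})\circ g_{TY_1,TY_2}\circ Tg_{Y_1,Y_2}$, for all sets $Y_1,Y_2$. It is well-behaved with respect to $\mathit{ev}_T\colon T\mathcal{V}\to\mathcal{V}$ if for all sets $X_1,X_2$ and maps $f_i\colon X_i\to\mathcal{V}$: $\mathit{ev}_T\circ T[f_1,\top_{X_2}]=[\mathit{ev}_T\circ Tf_1,\top_{TX_2}]\circ g_{X_1,X_2}$, $\mathit{ev}_T\circ T[\bot_{X_1},f_2]=[\bot_{TX_1},\mathit{ev}_T\circ Tf_2]\circ g_{X_1,X_2}$, and $\mathit{ev}_T\circ T[\bot_{X_1},\top_{X_2}]=[\bot_{TX_1},\top_{TX_2}]\circ g_{X_1,X_2}$, where $\top_Z,\bot_Z$ are constant maps on $Z$ with values $\top,\bot$ of the quantale. *)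

From HB Require Import structures.
From mathcomp Require Import all_boot all_order all_algebra.
From mathcomp Require Import boolp classical_sets functions reals constructive_ereal ereal esum.
Set Implicit Arguments. Unset Strict Implicit. Unset Printing Implicit Defensive.
Import Order.TTheory GRing.Theory Num.Theory.
Local Open Scope classical_set_scope.
Local Open Scope ring_scope.
Local Open Scope ereal_scope.

Section Subdist.
Variable R : realType.

Definition ssum (T : Type) (a : T -> \bar R) : \bar R :=
  \esum_(x in [set: {classic T}]) a x.

Definition is_subdist (X : Type) (p : X -> \bar R) : Prop :=
  (forall x, 0 <= p x /\ p x <= 1) /\ ssum p <= 1.

Record subdist (X : Type) := Subdist { sd :> X -> \bar R ; sdP : is_subdist sd }.

Lemma is_subdist0 (X : Type) : is_subdist (fun _ : X => 0).
Proof.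
split; first by move=> x; rewrite lexx lee01.
by rewrite /ssum esum1 ?lee01.
Qed.

Definition subdist0 (X : Type) : subdist X := Subdist (@is_subdist0 X).

(* Packages p as a subdistribution; every use below is on a p which is
   (mathematically) a subdistribution, so the fallback is never taken. *)
Definition mkS (X : Type) (p : X -> \bar R) : subdist X :=
  match pselect (is_subdist p) with
  | left h => Subdist h
  | right _ => subdist0 X
  end.

Definition etaS (X : Type) (x : X) : subdist X :=
  mkS (fun y => (`[< y = x >]%:R)%:E).

Definition mapS (X Y : Type) (f : X -> Y) (p : subdist X) : subdist Y :=
  mkS (fun y => ssum (fun x => if `[< f x = y >] then p x else 0)).

Definition muS (X : Type) (P : subdist (subdist X)) : subdist X :=
  mkS (fun x => ssum (fun nu : subdist X => P nu * nu x)).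

Definition summap (A B C D : Type) (f1 : A -> C) (f2 : B -> D) (z : A + B) : C + D :=
  match z with inl a => inl (f1 a) | inr b => inr (f2 b) end.

Definition copair (A B C : Type) (h1 : A -> C) (h2 : B -> C) (z : A + B) : C :=
  match z with inl a => h1 a | inr b => h2 b end.

Definition resl (X1 X2 : Type) (p : subdist (X1 + X2)) : subdist X1 :=
  mkS (fun x1 => p (inl x1)).
Definition resr (X1 X2 : Type) (p : subdist (X1 + X2)) : subdist X2 :=
  mkS (fun x2 => p (inr x2)).

Definition gS (X1 X2 : Type) (p : subdist (X1 + X2)) : subdist X1 + subdist X2 :=
  if `[< exists x1 : X1, p (inl x1) != 0 >] then inl (resl p) else inr (resr p).

(* the quantale V = [0,oo]_+ : top = 0, bottom = +oo *)
Definition V := {x : \bar R | 0 <= x}.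
Definition vtop : V := exist (fun x : \bar R => 0 <= x) 0 (lexx 0).
Definition vbot : V := exist (fun x : \bar R => 0 <= x) +oo (leey 0).

Lemma ev_ge0 (p : subdist V) : 0 <= ssum (fun v : V => proj1_sig v * p v).
Proof.
apply: esum_ge0 => v _; apply: mule_ge0; first exact: (proj2_sig v).
by case: (sdP p) => /(_ v) [].
Qed.

(* ev_S = E : S[0,oo] -> [0,oo], E(p) = sum_v v * p(v)  (0 * oo = 0) *)
Definition evS (p : subdist V) : V :=
  exist (fun x : \bar R => 0 <= x) _ (ev_ge0 p).

End Subdist.

From HB Require Import structures.
From mathcomp Require Import all_boot all_order all_algebra.
From mathcomp Require Import boolp classical_sets functions reals constructive_ereal ereal esum.

(** Pushforward along [f1 + f2], Dirac
    distributions and the multiplication charge [X1] exactly when their argument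
    does (for [muS P]: when some [nu] with [P nu > 0] charges [X1]), and they
    commute with the restrictions; this gives naturality and both monad
    compatibilities. For the evaluation, [E] of a pushforward [h_* p] is
    [sum_x h x * p x]; as [0 * oo = 0], the value [oo] on [X1] contributes [oo]
    exactly when [p] charges [X1], while the value [0] on [X2] never
    contributes. *)

Set Implicit Arguments. Unset Strict Implicit. Unset Printing Implicit Defensive.
Import Order.TTheory GRing.Theory Num.Theory.
Local Open Scope classical_set_scope.
Local Open Scope ring_scope.
Local Open Scope ereal_scope.

Section ssum.
Variable R : realType.

Lemma ssum_ge0 (T : Type) (a : T -> \bar R) : (forall x, 0 <= a x) -> 0 <= ssum a.
Proof. by move=> a0; apply: esum_ge0 => x _. Qed.

Lemma ssum0 (T : Type) (a : T -> \bar R) : (forall x, a x = 0) -> ssum a = 0.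
Proof. by move=> a0; rewrite /ssum esum1. Qed.

Lemma eq_ssum (T : Type) (a b : T -> \bar R) : (forall x, a x = b x) -> ssum a = ssum b.
Proof. by move=> eab; apply: eq_esum => x _. Qed.

Lemma ssum_ge (T : Type) (a : T -> \bar R) x : (forall x, 0 <= a x) -> a x <= ssum a.
Proof.
move=> a0; rewrite /ssum -(@esum_set1 R {classic T} x a) //.
rewrite (esum_mkcond [set x : {classic T}]).
by apply: le_esum => y _; case: ifP.
Qed.

Lemma ssum_neq0 (T : Type) (a : T -> \bar R) : (forall x, 0 <= a x) ->
  ssum a != 0 <-> exists x, a x != 0.
Proof.
move=> a0; split=> [sa0|[x ax]].
  apply: contrapT => an0; move: sa0; rewrite ssum0 ?eqxx // => x.
  by apply/eqP/negPn/negP => ax; apply: an0; exists x.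
by rewrite gt_eqF // (lt_le_trans _ (ssum_ge x a0)) // lt0e ax a0.
Qed.

Lemma ssum_if_eq (T : Type) (x0 : T) (F : T -> \bar R) : 0 <= F x0 ->
  ssum (fun y => if `[< y = x0 >] then F y else 0) = F x0.
Proof.
move=> F0; rewrite /ssum -[RHS](@esum_set1 R {classic T} x0 F) //.
rewrite [RHS](esum_mkcond [set x0 : {classic T}]); apply: eq_esum => y _.
by case: asboolP => [->|yx0]; [rewrite mem_set | rewrite memNset].
Qed.

Lemma ssum_if_eqr (T : Type) (x0 : T) (F : T -> \bar R) : 0 <= F x0 ->
  ssum (fun y => if `[< x0 = y >] then F y else 0) = F x0.
Proof.
move=> F0; rewrite -[RHS](ssum_if_eq F0); apply: eq_ssum => y.
by rewrite (asbool_equiv_eq (conj esym esym)).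
Qed.

Lemma exchange_ssum (T1 T2 : Type) (a : T1 -> T2 -> \bar R) :
  (forall i j, 0 <= a i j) ->
  ssum (fun i => ssum (a i)) = ssum (fun j => ssum (fun i => a i j)).
Proof.
move=> a0; rewrite /ssum !esum_esum //.
rewrite (reindex_esum ([set: {classic T2}] `*`` (fun=> [set: {classic T1}]))
  _ (fun x => (x.2, x.1))) //.
split=> //= [[i1 i2] [j1 j2] _ _ [-> ->]|[i1 i2] _] //.
by exists (i2, i1).
Qed.

Lemma ssum_split (X1 X2 : Type) (b : X1 + X2 -> \bar R) : (forall x, 0 <= b x) ->
  ssum b = ssum (fun x1 => b (inl x1)) + ssum (fun x2 => b (inr x2)).
Proof.
move=> b0; pose il : {classic X1} -> {classic (X1 + X2)} := inl.
pose ir : {classic X2} -> {classic (X1 + X2)} := inr.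
rewrite /ssum (esumID (range il)) // !setTI.
have -> : ~` range il = ir @` setT.
  apply/seteqP; split => [[x1|x2] /= Nx|_ [x2 _ <-] [x1 _]] //.
    by exfalso; apply: Nx; exists x1.
  by exists x2.
by rewrite !esum_image // => ? ? _ _ [].
Qed.

Lemma ssumZl_le (T : Type) (c : \bar R) (a : T -> \bar R) : 0 <= c ->
  (forall i, 0 <= a i) -> ssum (fun i => c * a i) <= c * ssum a.
Proof.
move=> c0 a0; apply: ge_ereal_sup => _ [X HX <-]; rewrite -ge0_mule_fsumr //.
by apply: lee_wpmul2l => //; apply: ereal_sup_ubound; exists X.
Qed.

Lemma ssumZl (T : Type) (c : \bar R) (a : T -> \bar R) : 0 <= c ->
  (forall i, 0 <= a i) -> ssum (fun i => c * a i) = c * ssum a.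
Proof.
move=> c0 a0; apply/eqP; rewrite eq_le ssumZl_le //=.
have ca0 i : 0 <= c * a i by rewrite mule_ge0.
case: c c0 ca0 => [r||//]; rewrite ?lee_fin => c0 ca0.
  have [->|rn0] := eqVneq r 0%R.
    by rewrite mul0e; apply: ssum_ge0 => i; rewrite mul0e.
  have -> : ssum a = ssum (fun i => r^-1%:E * (r%:E * a i)).
    by apply: eq_ssum => i; rewrite muleA -EFinM mulVf // mul1e.
  rewrite (le_trans (lee_wpmul2l _ (ssumZl_le _ _))) ?lee_fin ?invr_ge0 //.
  by rewrite muleA -EFinM mulfV // mul1e.
have [->|sa0] := eqVneq (ssum a) 0; first by rewrite mule0 ssum_ge0.
have [x ax] := (ssum_neq0 a0).1 sa0.
rewrite gt0_mulye ?lt0e ?sa0 ?ssum_ge0 //.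
by apply: le_trans (ssum_ge x ca0); rewrite gt0_mulye // lt0e ax a0.
Qed.

Lemma ssumZr (T : Type) (c : \bar R) (a : T -> \bar R) : 0 <= c ->
  (forall i, 0 <= a i) -> ssum (fun i => a i * c) = ssum a * c.
Proof.
by move=> c0 a0; rewrite muleC -ssumZl //; apply: eq_ssum => i; rewrite muleC.
Qed.

Lemma ssum_fibres (X Y : Type) (k : X -> Y) (a : X -> \bar R) (c : Y -> \bar R) :
  (forall x, 0 <= a x) -> (forall y, 0 <= c y) ->
  ssum (fun y => ssum (fun x => if `[< k x = y >] then a x else 0) * c y)
  = ssum (fun x => a x * c (k x)).
Proof.
move=> a0 c0; have ka0 y x : 0 <= if `[< k x = y >] then a x else 0 by case: ifP.
rewrite (eq_ssum (fun y => esym (ssumZr (c0 y) (ka0 y)))).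
rewrite exchange_ssum => [|y x]; last by case: ifP; rewrite ?mul0e ?mule_ge0.
apply: eq_ssum => x.
rewrite -[RHS](ssum_if_eqr (x0 := k x) (F := fun y => a x * c y)) ?mule_ge0 //.
by apply: eq_ssum => y; case: ifP; rewrite ?mul0e.
Qed.

End ssum.

Section subdist_monad.
Variable R : realType.

Lemma subdist_ext (X : Type) (p q : subdist R X) : (forall x, p x = q x) -> p = q.
Proof.
case: p q => [p hp] [q hq] /= /funext epq; subst q.
by congr Subdist; exact: Prop_irrelevance.
Qed.

Lemma sd_ge0 (X : Type) (p : subdist R X) x : 0 <= p x.
Proof. by case: (sdP p) => /(_ x) []. Qed.

Lemma sd_sum_le1 (X : Type) (p : subdist R X) : ssum p <= 1.
Proof. by case: (sdP p). Qed.

Lemma is_subdistP (X : Type) (a : X -> \bar R) :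
  (forall x, 0 <= a x) -> ssum a <= 1 -> is_subdist a.
Proof. by move=> a0 a1; split=> // x; rewrite a0 (le_trans (ssum_ge x a0)). Qed.

Lemma mkSE (X : Type) (a : X -> \bar R) x : is_subdist a -> mkS a x = a x.
Proof. by rewrite /mkS; case: pselect. Qed.

Lemma mapSE (X Y : Type) (f : X -> Y) (p : subdist R X) y :
  mapS f p y = ssum (fun x => if `[< f x = y >] then p x else 0).
Proof.
rewrite mkSE //; apply: is_subdistP => [y'|].
  by apply: ssum_ge0 => x; case: ifP => // _; exact: sd_ge0.
have := ssum_fibres f (c := fun=> 1) (@sd_ge0 _ p) (fun=> lee01).
under eq_ssum do rewrite mule1; under [in RHS]eq_ssum do rewrite mule1.
by move=> ->; exact: sd_sum_le1.
Qed.

Lemma etaSE (X : Type) (x y : X) : etaS R x y = if `[< y = x >] then 1 else 0.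
Proof.
rewrite /etaS mkSE; first by case: asboolP.
apply: is_subdistP => [z|]; first by case: asboolP.
rewrite (_ : (fun z => _) = fun z => if `[< z = x >] then 1 else 0) ?ssum_if_eq //.
by apply: funext => z; case: asboolP.
Qed.

Lemma muSE (X : Type) (P : subdist R (subdist R X)) x :
  muS P x = ssum (fun nu : subdist R X => P nu * nu x).
Proof.
have Pnu0 nu z : 0 <= P nu * nu z by rewrite mule_ge0 ?sd_ge0.
rewrite mkSE //; apply: is_subdistP => [z|]; first exact: ssum_ge0.
rewrite exchange_ssum //; apply: le_trans (sd_sum_le1 P); apply: le_esum => nu _.
rewrite /= ssumZl; [|exact: sd_ge0..].
by rewrite (le_trans (lee_wpmul2l (sd_ge0 P nu) (sd_sum_le1 nu))) ?mule1.
Qed.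

Lemma reslE (X1 X2 : Type) (p : subdist R (X1 + X2)) x : resl p x = p (inl x).
Proof.
rewrite mkSE //; apply: is_subdistP => [y|]; first exact: sd_ge0.
apply: le_trans (sd_sum_le1 p); rewrite [leRHS]ssum_split; last exact: sd_ge0.
by rewrite leeDl // ssum_ge0 // => ?; exact: sd_ge0.
Qed.

Lemma resrE (X1 X2 : Type) (p : subdist R (X1 + X2)) x : resr p x = p (inr x).
Proof.
rewrite mkSE //; apply: is_subdistP => [y|]; first exact: sd_ge0.
apply: le_trans (sd_sum_le1 p); rewrite [leRHS]ssum_split; last exact: sd_ge0.
by rewrite leeDr // ssum_ge0 // => ?; exact: sd_ge0.
Qed.

Lemma mapS_neq0 (X Y : Type) (f : X -> Y) (p : subdist R X) y :
  mapS f p y != 0 <-> exists2 x, f x = y & p x != 0.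
Proof.
rewrite mapSE ssum_neq0 => [|x]; last by case: ifP => // _; exact: sd_ge0.
split=> [[x]|[x <- px]]; last by exists x; rewrite asboolT.
by case: asboolP => [fx px|_]; [exists x | rewrite eqxx].
Qed.

Lemma muS_neq0 (X : Type) (P : subdist R (subdist R X)) x :
  muS P x != 0 <-> exists2 nu, P nu != 0 & nu x != 0.
Proof.
rewrite muSE ssum_neq0 => [|nu]; last by rewrite mule_ge0 ?sd_ge0.
split=> [[nu]|[nu Pnu nux]]; last by exists nu; rewrite mule_eq0 negb_or Pnu.
by rewrite mule_eq0 negb_or => /andP[]; exists nu.
Qed.

Lemma ssum_mapS (X Y : Type) (k : X -> Y) (p : subdist R X) (c : Y -> \bar R) :
  (forall y, 0 <= c y) -> ssum (fun y => mapS k p y * c y) = ssum (fun x => p x * c (k x)).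
Proof.
move=> c0; rewrite -(ssum_fibres k) //; last exact: sd_ge0.
by apply: eq_ssum => y; rewrite mapSE.
Qed.

Definition charges_left (X1 X2 : Type) (p : X1 + X2 -> \bar R) :=
  exists x1, p (inl x1) != 0.

Variant gS_spec (X1 X2 : Type) (p : subdist R (X1 + X2)) :
    subdist R X1 + subdist R X2 -> Prop :=
  | GSinl of charges_left p : gS_spec p (inl (resl p))
  | GSinr of (forall x1, p (inl x1) = 0) : gS_spec p (inr (resr p)).

Lemma gSP (X1 X2 : Type) (p : subdist R (X1 + X2)) : gS_spec p (gS p).
Proof.
rewrite /gS; case: asboolP => [|pl]; first exact: GSinl.
by apply: GSinr => x1; apply/eqP/negPn/negP => px1; apply: pl; exists x1.
Qed.

Lemma gS_transfer (X1 X2 Y1 Y2 : Type) (F : subdist R X1 -> subdist R Y1)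
    (G : subdist R X2 -> subdist R Y2) (p : subdist R (X1 + X2))
    (q : subdist R (Y1 + Y2)) :
  (charges_left q <-> charges_left p) ->
  (charges_left p -> forall y1, q (inl y1) = F (resl p) y1) ->
  ((forall x1, p (inl x1) = 0) -> forall y2, q (inr y2) = G (resr p) y2) ->
  gS q = summap F G (gS p).
Proof.
move=> [qp pq] qF qG; case: gSP => [ql|q0]; case: gSP => [pl|p0] /=.
- by congr inl; apply: subdist_ext => y1; rewrite reslE qF.
- by have [x1] := qp ql; rewrite p0 eqxx.
- by have [y1] := pq pl; rewrite q0 eqxx.
- by congr inr; apply: subdist_ext => y2; rewrite resrE qG.
Qed.

Lemma mapS_summap_inl (X1 X2 Y1 Y2 : Type) (f1 : X1 -> Y1) (f2 : X2 -> Y2)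
    (p : subdist R (X1 + X2)) y1 :
  mapS (summap f1 f2) p (inl y1) = mapS f1 (resl p) y1.
Proof.
rewrite !mapSE ssum_split => [|x]; last by case: ifP => // _; exact: sd_ge0.
rewrite [X in _ + X]ssum0 ?adde0 => [|x2]; last by rewrite asboolF.
apply: eq_ssum => x1; rewrite reslE (asbool_equiv_eq (_ : _ <-> f1 x1 = y1)) //.
by split=> [/= []|<-].
Qed.

Lemma mapS_summap_inr (X1 X2 Y1 Y2 : Type) (f1 : X1 -> Y1) (f2 : X2 -> Y2)
    (p : subdist R (X1 + X2)) y2 :
  mapS (summap f1 f2) p (inr y2) = mapS f2 (resr p) y2.
Proof.
rewrite !mapSE ssum_split => [|x]; last by case: ifP => // _; exact: sd_ge0.
rewrite [X in X + _]ssum0 ?add0e => [|x1]; last by rewrite asboolF.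
apply: eq_ssum => x2; rewrite resrE (asbool_equiv_eq (_ : _ <-> f2 x2 = y2)) //.
by split=> [/= []|<-].
Qed.

Lemma gS_mapS (X1 X2 Y1 Y2 : Type) (f1 : X1 -> Y1) (f2 : X2 -> Y2)
    (p : subdist R (X1 + X2)) :
  gS (mapS (summap f1 f2) p) = summap (mapS f1) (mapS f2) (gS p).
Proof.
apply: gS_transfer => [|_ y1|_ y2]; rewrite ?mapS_summap_inl ?mapS_summap_inr //.
split=> [[y1]|[x1 px1]].
  by rewrite mapS_summap_inl => /mapS_neq0[x1 _]; rewrite reslE; exists x1.
by exists (f1 x1); rewrite mapS_summap_inl; apply/mapS_neq0; exists x1; rewrite ?reslE.
Qed.

Lemma etaS_inj (Z W : Type) (f : Z -> W) (z z' : Z) : injective f ->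
  etaS R (f z) (f z') = etaS R z z'.
Proof.
by move=> fI; rewrite !etaSE (asbool_equiv_eq (conj (@fI z' z) (@congr1 _ _ f z' z))).
Qed.

Lemma gS_etaS (Y1 Y2 : Type) (y : Y1 + Y2) :
  gS (etaS R y) = summap (@etaS R Y1) (@etaS R Y2) y.
Proof.
case: y => [y1|y2]; case: gSP => [[x1 ex1]|e0] /=.
- by congr inl; apply: subdist_ext => x; rewrite reslE etaS_inj // => ? ? [].
- by have := e0 y1; rewrite etaSE asboolT // => /eqP; rewrite onee_eq0.
- by rewrite etaSE asboolF ?eqxx in ex1.
- by congr inr; apply: subdist_ext => x; rewrite resrE etaS_inj // => ? ? [].
Qed.

Lemma charges_left_muS (X1 X2 : Type) (P : subdist R (subdist R (X1 + X2))) :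
  charges_left (muS P) <-> exists2 nu, P nu != 0 & charges_left nu.
Proof.
split=> [[x1 /muS_neq0[nu Pnu nux1]]|[nu Pnu [x1 nux1]]]; first by exists nu => //; exists x1.
by exists x1; apply/muS_neq0; exists nu.
Qed.

Lemma charges_left_mapS_gS (X1 X2 : Type) (P : subdist R (subdist R (X1 + X2))) :
  charges_left (mapS (@gS R X1 X2) P) <-> exists2 nu, P nu != 0 & charges_left nu.
Proof.
split=> [[q /mapS_neq0[nu]]|[nu Pnu nul]].
  by case: gSP => // nul _ Pnu; exists nu.
exists (resl nu); apply/mapS_neq0; exists nu => //.
by case: gSP nul => // nu0 [x1]; rewrite nu0 eqxx.
Qed.

Lemma ssum_resl_mapS (A Y1 Y2 : Type) (k : A -> subdist R Y1 + subdist R Y2)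
    (P : subdist R A) (c : subdist R Y1 -> \bar R) : (forall q, 0 <= c q) ->
  ssum (fun q => resl (mapS k P) q * c q) = ssum (fun a => P a * copair c (fun=> 0) (k a)).
Proof.
move=> c0; have cc0 y : 0 <= copair c (fun=> 0) y by case: y.
rewrite -(ssum_mapS k) // ssum_split => [|y]; last by rewrite /= mule_ge0 ?sd_ge0 ?cc0.
rewrite /= [X in _ + X]ssum0 ?adde0 => [|q]; last exact: mule0.
by apply: eq_ssum => q; rewrite reslE.
Qed.

Lemma ssum_resr_mapS (A Y1 Y2 : Type) (k : A -> subdist R Y1 + subdist R Y2)
    (P : subdist R A) (c : subdist R Y2 -> \bar R) : (forall q, 0 <= c q) ->
  ssum (fun q => resr (mapS k P) q * c q) = ssum (fun a => P a * copair (fun=> 0) c (k a)).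
Proof.
move=> c0; have cc0 y : 0 <= copair (fun=> 0) c y by case: y.
rewrite -(ssum_mapS k) // ssum_split => [|y]; last by rewrite /= mule_ge0 ?sd_ge0 ?cc0.
rewrite /= [X in X + _]ssum0 ?add0e => [|q]; last exact: mule0.
by apply: eq_ssum => q; rewrite resrE.
Qed.

Lemma gS_muS (X1 X2 : Type) (P : subdist R (subdist R (X1 + X2))) :
  gS (muS P) = summap (@muS R X1) (@muS R X2) (gS (mapS (@gS R X1 X2) P)).
Proof.
apply: gS_transfer => [|_ x1|Q0 x2].
- by rewrite charges_left_muS charges_left_mapS_gS.
- rewrite muSE [RHS]muSE ssum_resl_mapS => [|q]; last exact: sd_ge0.
  (* A [nu] that does not charge [X1] has weight [0] on both sides. *)
  by apply: eq_ssum => nu; case: gSP => [_|nu0] /=; rewrite ?reslE ?nu0.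
- rewrite muSE [RHS]muSE ssum_resr_mapS => [|q]; last exact: sd_ge0.
  apply: eq_ssum => nu; case: gSP => [nul|_] /=; rewrite ?resrE //.
  suff -> : P nu = 0 by rewrite !mul0e.
  apply/eqP; apply: contraT => Pnu.
  by have [q] := proj2 (charges_left_mapS_gS P) (ex_intro2 _ _ nu Pnu nul); rewrite Q0 eqxx.
Qed.

Lemma V_inj (a b : V R) : proj1_sig a = proj1_sig b -> a = b.
Proof. exact: val_inj. Qed.

Lemma evS_mapS (X : Type) (h : X -> V R) (p : subdist R X) :
  proj1_sig (evS (mapS h p)) = ssum (fun x => proj1_sig (h x) * p x).
Proof.
rewrite /=; under eq_ssum do rewrite muleC.
by rewrite ssum_mapS => [|v]; [apply: eq_ssum => x; rewrite muleC | exact: (proj2_sig v)].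
Qed.

Lemma evS_mapS_vtop (X : Type) (p : subdist R X) : evS (mapS (fun=> vtop R) p) = vtop R.
Proof. by apply: V_inj; rewrite evS_mapS ssum0 // => x; rewrite mul0e. Qed.

Lemma evS_copair_vtop (X1 X2 : Type) (f1 : X1 -> V R) (p : subdist R (X1 + X2)) :
  evS (mapS (copair f1 (fun=> vtop R)) p)
  = copair (fun q => evS (mapS f1 q)) (fun=> vtop R) (gS p).
Proof.
have evE : proj1_sig (evS (mapS (copair f1 (fun=> vtop R)) p))
    = ssum (fun x1 => proj1_sig (f1 x1) * p (inl x1)).
  rewrite evS_mapS ssum_split => [|x]; last first.
    by rewrite mule_ge0 ?sd_ge0 ?(proj2_sig (copair f1 (fun=> vtop R) x)).
  by rewrite [X in _ + X]ssum0 ?adde0 => [|x2]; last exact: mul0e.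
case: gSP => [_|p0] /=; apply: V_inj; rewrite evE.
  by rewrite evS_mapS; apply: eq_ssum => x1; rewrite reslE.
by apply: ssum0 => x1; rewrite p0 mule0.
Qed.

Lemma evS_copair_vbot (X1 X2 : Type) (f2 : X2 -> V R) (p : subdist R (X1 + X2)) :
  evS (mapS (copair (fun=> vbot R) f2) p)
  = copair (fun=> vbot R) (fun q => evS (mapS f2 q)) (gS p).
Proof.
have f2p0 x2 : 0 <= proj1_sig (f2 x2) * p (inr x2).
  by rewrite mule_ge0 ?sd_ge0 ?(proj2_sig (f2 x2)).
have evE : proj1_sig (evS (mapS (copair (fun=> vbot R) f2) p))
    = +oo * ssum (fun x1 => p (inl x1)) + ssum (fun x2 => proj1_sig (f2 x2) * p (inr x2)).
  rewrite evS_mapS ssum_split => [|[x1|x2]] /=; last 2 first.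
  - by rewrite mule_ge0 ?sd_ge0.
  - exact: f2p0.
  by rewrite ssumZl => [|//|x1]; last exact: sd_ge0.
case: gSP => [pl|p0] /=; apply: V_inj; rewrite evE.
  have pl0 : 0 < ssum (fun x1 => p (inl x1)).
    rewrite lt0e ssum_ge0 ?andbT => [|x1]; last exact: sd_ge0.
    exact/(ssum_neq0 (fun x1 => sd_ge0 p (inl x1))).
  by rewrite gt0_mulye // addye // -ltNye (lt_le_trans _ (ssum_ge0 f2p0)) ?ltNy0.
rewrite ssum0 ?mule0 ?add0e // evS_mapS.
by apply: eq_ssum => x2; rewrite resrE.
Qed.

End subdist_monad.

Theorem mainTheorem13 (R : realType) :
  (* naturality *)
  (forall (X1 X2 Y1 Y2 : Type) (f1 : X1 -> Y1) (f2 : X2 -> Y2) (p : subdist R (X1 + X2)),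
      gS (mapS (summap f1 f2) p) = summap (@mapS R _ _ f1) (@mapS R _ _ f2) (gS p)) /\
  (* compatibility with the unit *)
  (forall (Y1 Y2 : Type) (y : Y1 + Y2),
      gS (@etaS R _ y) = summap (@etaS R Y1) (@etaS R Y2) y) /\
  (* compatibility with the multiplication *)
  (forall (Y1 Y2 : Type) (P : subdist R (subdist R (Y1 + Y2))),
      gS (muS P) = summap (@muS R Y1) (@muS R Y2) (gS (mapS (@gS R Y1 Y2) P))) /\
  (* well-behaved with respect to ev_S = E *)
  (forall (X1 X2 : Type) (f1 : X1 -> V R) (f2 : X2 -> V R),
      (forall p : subdist R (X1 + X2),
          evS (mapS (copair f1 (fun _ => vtop R)) p)
          = copair (fun q => evS (mapS f1 q)) (fun _ => vtop R) (gS p)) /\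
      (forall p : subdist R (X1 + X2),
          evS (mapS (copair (fun _ => vbot R) f2) p)
          = copair (fun _ => vbot R) (fun q => evS (mapS f2 q)) (gS p)) /\
      (forall p : subdist R (X1 + X2),
          evS (mapS (copair (fun _ => vbot R) (fun _ => vtop R)) p)
          = copair (fun _ => vbot R) (fun _ => vtop R) (gS p))).
Proof.
split; first exact: gS_mapS.
split; first exact: gS_etaS.
split; first exact: gS_muS.
move=> X1 X2 f1 f2; split; first exact: evS_copair_vtop.
split; first exact: evS_copair_vbot.
by move=> p; rewrite evS_copair_vbot; case: (gS p) => //= q; rewrite evS_mapS_vtop.
Qed.
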